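(* There exist complex numbers $(a_n)_{n\ge0}$ with $\#\{n\colon a_n\neq 0\}=+\infty$ and $\varlimsup_{n\to+\infty}\sqrt[n]{|a_n|}=0$ (hence a random entire function $f(z,\omega)=\sum_{n\ge0}\xi_n(\omega)a_nz^n$ with independent standard complex gaussian $\xi_n$) and a set $E\subset(1;+\infty)$ of finite logarithmic measure such that for all $r\in(1;+\infty)\setminus E$, $$N(r)>\frac{\sqrt{s(r)}}{\ln^3 s(r)},$$ where $N(r)=\#\{n\colon \ln(|a_n|r^n)>0\}$ and $s(r)=2\sum_{n\colon \ln(|a_n|r^n)>0}\ln(|a_n|r^n)$.
   Context: A standard complex gaussian random variable has density $\frac1\pi e^{-|z|^2}$ on $\mathbb{C}$. A set $E\subset(1,+\infty)$ has finite logarithmic measure if $\int_E\frac{dr}{r}<+\infty$. *)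

From HB Require Import structures.
From mathcomp Require Import all_boot all_order all_algebra.
From mathcomp Require Import all_classical all_reals all_analysis.
From mathcomp Require Import complex.
Set Implicit Arguments. Unset Strict Implicit. Unset Printing Implicit Defensive.
Import Order.TTheory GRing.Theory Num.Theory.
Local Open Scope classical_set_scope.
Local Open Scope ring_scope.

Definition cmod (R : realType) (z : R[i]) : R := ComplexField.Normc.normc z.

Definition posset (R : realType) (a : nat -> R[i]) (r : R) : set nat :=
  [set n | 0 < ln (cmod (a n) * r ^+ n)].

(* N(r) = #{n : ln(|a_n| r^n) > 0}  (finite for the entire functions considered;
   computed as an extended-real sum and converted back to R). *)
Definition Ncount (R : realType) (a : nat -> R[i]) (r : R) : R :=
  fine (\esum_(n in posset a r) (1%E : \bar R)).

Definition s_of_r (R : realType) (a : nat -> R[i]) (r : R) : R :=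
  2 * fine (\esum_(n in posset a r) ((ln (cmod (a n) * r ^+ n))%:E)).

Definition finite_log_measure (R : realType) (E : set R) : Prop :=
  E `<=` `]1, +oo[ /\ measurable E /\
  (\int[@lebesgue_measure R]_(x in E) (x^-1)%:E < +oo)%E.

From HB Require Import structures.
From mathcomp Require Import all_boot all_order all_algebra.
From mathcomp Require Import all_classical all_reals all_analysis.
From mathcomp Require Import complex lra.
From mathcomp Require Import measurable_realfun.
Import Order.TTheory GRing.Theory Num.Theory.
Local Open Scope classical_set_scope.
Local Open Scope ring_scope.
Local Open Scope complex_scope.

(* Take [a_n = n^-n].  Then [ln (|a_n| r^n) = n ln (r / n)] is positive exactly
   for [1 <= n < r], so [N(r) = ceil r - 1].  Since [n ln (r / n) <= r - n],
   [s(r) <= 2 N(r) r <= 2 N(r) (N(r) + 1)], whence [sqrt s(r) <= 2 N(r)]; and the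
   term [n = 1] gives [s(r) >= 2 ln r], so [ln^3 s(r) >= 8] as soon as
   [r >= e^(e^2)].  The exceptional set [E = (1, e^(e^2))] is bounded, hence of
   finite logarithmic measure, and [|a_n|^(1/n) = 1/n -> 0]. *)

(* Keeps [/=] from unfolding the modulus into [sqrt (Re ^ 2 + Im ^ 2)]. *)
Arguments cmod : simpl never.

Section inverse_power_coefficients.
Variable R : realType.

Lemma cmod_real (x : R) : 0 <= x -> cmod x%:C = x.
Proof. by move=> x0; rewrite /cmod /= expr0n addr0 sqrtr_sqr ger0_norm. Qed.

Lemma ln_gt0E (x : R) : (0 < ln x) = (1 < x).
Proof.
apply/idP/idP; last exact: ln_gt0.
by apply: contraLR; rewrite -!leNgt => /ln_le0.
Qed.

Definition ceiln (r : R) : nat := `|Num.ceil r|%N.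

Lemma ceil_ceiln (r : R) : 0 <= r -> Num.ceil r = (ceiln r)%:Z.
Proof. by move=> r0; rewrite gez0_abs // ceil_ge0 (lt_le_trans _ r0) ?ltrN10. Qed.

Lemma ltn_ceiln (r : R) (n : nat) : 0 <= r -> (n < ceiln r)%N = (n%:R < r).
Proof. by move=> r0; rewrite -ltz_nat -ceil_ceiln // ceil_gt_int -pmulrn. Qed.

Lemma ceiln_ge (r : R) : 0 <= r -> r <= (ceiln r)%:R.
Proof. by move=> r0; rewrite pmulrn -ceil_ceiln // ceil_ge. Qed.

Lemma ln_div_mulrn_le (r : R) (n : nat) : 0 < r -> (0 < n)%N ->
  ln (r / n%:R) *+ n <= r.
Proof.
move=> r0 n0; have n0' : 0 < n%:R :> R by rewrite ltr0n.
have ln_le : ln (r / n%:R) <= r / n%:R - 1.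
  by rewrite -{1}[r / _](subrKC 1) le_ln1Dx // ltrBrDl subrr divr_gt0.
apply: le_trans (ler_wMn2r n ln_le) _.
by rewrite mulrnBl -[r / _ *+ n]mulr_natr divfK ?gt_eqF // gerBl ler0n.
Qed.

(* [sqrt (2 S) <= sqrt (2 N (N + 1)) <= 2 N], while [ln (2 S) ^ 3 >= 8]. *)
Lemma sqrt_div_ln3_lt (N r S : R) :
  1 <= N -> r <= N + 1 -> S <= N * r -> expR 2 <= S ->
  Num.sqrt (2 * S) / ln (2 * S) ^+ 3 < N.
Proof.
move=> N1 rN SNr S_big.
have S0 : 0 < S by apply: lt_le_trans S_big; rewrite expR_gt0.
have ln2S : 2 <= ln (2 * S).
  rewrite -ler_expR lnK ?posrE ?mulr_gt0 //; apply: le_trans S_big _.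
  by rewrite ler_peMl ?ltW //; lra.
have ln3 : 8 <= ln (2 * S) ^+ 3 by rewrite !exprS expr0 mulr1; nra.
have sqrt_le : Num.sqrt (2 * S) <= 2 * N.
  rewrite -[2 * N]ger0_norm ?mulr_ge0 ?(le_trans _ N1) // -sqrtr_sqr.
  rewrite ler_sqrt ?sqr_ge0 //; apply: le_trans (_ : 2 * (N * (N + 1)) <= _).
    by rewrite ler_pM2l // (le_trans SNr) // ler_pM2l ?(lt_le_trans _ N1).
  nra.
rewrite ltr_pdivrMr ?(lt_le_trans _ ln3) //; apply: le_lt_trans sqrt_le _.
have : 8 * N <= N * ln (2 * S) ^+ 3 by rewrite mulrC ler_pM2l ?(lt_le_trans _ N1).
nra.
Qed.

Lemma finite_log_measure_itv (b : R) : finite_log_measure `]1, b[.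
Proof.
have mE : measurable `]1, b[%classic by exact: measurable_itv.
split; first by move=> x /=; rewrite !in_itv /= => /andP[-> _].
split => //.
have mf : measurable_fun `]1, b[%classic (fun x : R => (x^-1)%:E).
  apply/measurable_EFinP; apply: open_continuous_measurable_fun; first exact: interval_open.
  move=> x; rewrite inE /= in_itv /= => /andP[x1 _].
  by apply: inv_continuous; rewrite gt_eqF // (lt_trans _ x1).
have -> : (\int[lebesgue_measure]_(x in `]1%R, b[) (x^-1)%:E =
          \int[lebesgue_measure]_(x in `]1%R, b[) `|(x^-1)%:E|)%E.
  apply: eq_integral => x; rewrite inE /= in_itv /= => /andP[x1 _].
  by rewrite ger0_norm // invr_ge0 ltW // (lt_trans _ x1).
apply: (@le_lt_trans _ _ (1 * lebesgue_measure `]1%R, b[%classic)%E).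
  apply: integral_le_bound => //; apply: aeW => x; rewrite /= in_itv /= => /andP[x1 _].
  have x0 : 0 < x by rewrite (lt_trans _ x1).
  by rewrite lee_fin ger0_norm ?invr_ge0 ?ltW // invf_lt1.
by rewrite mul1e lebesgue_measure_itv /=; case: ifP => _; rewrite ?ltry.
Qed.

Definition inv_pow_coef (n : nat) : R[i] := ((n%:R^-1) ^+ n : R)%:C.

Lemma cmod_inv_pow_coef n : cmod (inv_pow_coef n) = (n%:R^-1) ^+ n.
Proof. by rewrite cmod_real // exprn_ge0 // invr_ge0. Qed.

Lemma inv_pow_coef_neq0 n : inv_pow_coef n != 0.
Proof.
apply: contraTneq isT => /(congr1 (@complex.Re R)) /= /eqP.
by rewrite expf_eq0 invr_eq0 pnatr_eq0; case: n.
Qed.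

Lemma ln_inv_pow_term (r : R) n : 0 < r -> (0 < n)%N ->
  ln (cmod (inv_pow_coef n) * r ^+ n) = ln (r / n%:R) *+ n.
Proof.
move=> r0 n0; rewrite cmod_inv_pow_coef -exprMn mulrC lnXn //.
by rewrite divr_gt0 // ltr0n.
Qed.

Lemma ln_inv_pow_term_gt0 (r : R) n : 0 < r ->
  (0 < ln (cmod (inv_pow_coef n) * r ^+ n)) = (0 < n)%N && (n%:R < r).
Proof.
case: n => [|n] r0; first by rewrite cmod_inv_pow_coef !expr0 mulr1 ln1 ltxx.
by rewrite ln_inv_pow_term // pmulrn_lgt0 // ln_gt0E ltr_pdivlMr ?ltr0n // mul1r.
Qed.

Lemma posset_inv_pow_coef (r : R) : 0 < r ->
  posset inv_pow_coef r = [set` index_iota 1 (ceiln r)].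
Proof.
move=> r0; apply/seteqP; split => n /=;
  by rewrite /posset /= ln_inv_pow_term_gt0 // mem_index_iota ltn_ceiln ?ltW.
Qed.

Lemma Ncount_inv_pow_coef (r : R) : 0 < r ->
  Ncount inv_pow_coef r = (ceiln r).-1%:R.
Proof.
move=> r0; rewrite /Ncount posset_inv_pow_coef // esum_fset; [|exact: finite_seq|by []].
by rewrite -fsbig_seq ?iota_uniq // (@sumEFin _ _ _ _ (fun=> 1)) sumr_const_nat subn1.
Qed.

Lemma s_of_r_inv_pow_coef (r : R) : 0 < r -> s_of_r inv_pow_coef r =
  2 * \sum_(1 <= n < ceiln r) ln (cmod (inv_pow_coef n) * r ^+ n).
Proof.
move=> r0; rewrite /s_of_r posset_inv_pow_coef // esum_fset; [|exact: finite_seq|].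
  by rewrite -fsbig_seq ?iota_uniq // sumEFin.
move=> n; rewrite inE /= mem_index_iota => /andP[n1 nr].
by rewrite lee_fin ltW // ln_inv_pow_term_gt0 // (leq_trans _ n1) // -ltn_ceiln ?ltW.
Qed.

Lemma limn_esup_root_inv_pow_coef :
  limn_esup (fun n => ((cmod (inv_pow_coef n)) `^ (n%:R)^-1)%:E) = 0%E.
Proof.
suff root_cvg : (fun n => ((cmod (inv_pow_coef n)) `^ (n%:R)^-1)%:E) @ \oo --> 0%E.
  by rewrite (cvg_limn_einf_sup root_cvg).2.
rewrite -cvg_shiftS.
suff -> : [sequence ((cmod (inv_pow_coef n.+1)) `^ (n.+1%:R)^-1)%:E]_n =
          EFin \o harmonic by exact: cvge_harmonic.
apply/funext => n /=; rewrite cmod_inv_pow_coef; congr EFin.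
by rewrite -powR_mulrn ?invr_ge0 // -powRrM mulfV ?pnatr_eq0 // powRr1 // invr_ge0.
Qed.

Lemma ln_inv_pow_term_le (r : R) n : 0 < r -> (0 < n)%N ->
  ln (cmod (inv_pow_coef n) * r ^+ n) <= r.
Proof. by move=> r0 n0; rewrite ln_inv_pow_term // ln_div_mulrn_le. Qed.

Lemma Ncount_inv_pow_coef_gt (r : R) : expR (expR 2) <= r ->
  Num.sqrt (s_of_r inv_pow_coef r) / ln (s_of_r inv_pow_coef r) ^+ 3 <
  Ncount inv_pow_coef r.
Proof.
move=> r_big; have r1 : 1 < r by apply: lt_le_trans r_big; rewrite -expR0 ltr_expR.
have r0 : 0 < r by apply: lt_trans r1.
rewrite Ncount_inv_pow_coef // s_of_r_inv_pow_coef //.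
set S := \sum_(1 <= n < ceiln r) _.
have K2 : (2 <= ceiln r)%N by rewrite ltn_ceiln ?ltW.
have S_le : S <= (ceiln r).-1%:R * r.
  rewrite -subn1 mulrC mulr_natr -sumr_const_nat.
  by apply: ler_sum_nat => n /andP[n1 _]; apply: ln_inv_pow_term_le.
have S_ge : ln r <= S.
  rewrite /S big_ltn // -{2}[r]expr1 ln_inv_pow_term // divr1 mulr1n lerDl.
  rewrite big_nat_cond sumr_ge0 // => n /andP[/andP[n1 nK] _].
  by rewrite ltW // ln_inv_pow_term_gt0 // (ltn_trans _ n1) //= -ltn_ceiln ?ltW.
apply: sqrt_div_ln3_lt S_le _.
- by rewrite ler1n -subn1 subn_gt0.
- by rewrite natr1 prednK ?(ltn_trans _ K2) // ceiln_ge ?ltW.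
- by apply: le_trans S_ge; rewrite -ler_expR lnK ?posrE.
Qed.

End inverse_power_coefficients.

Theorem lemma3p4 (R : realType) :
  exists (a : nat -> R[i]) (E : set R),
    ~ finite_set [set n | a n != 0] /\
    limn_esup (fun n => ((cmod (a n)) `^ (n%:R)^-1)%:E) = 0%E /\
    finite_log_measure E /\
    forall r : R, 1 < r -> ~ E r ->
      Ncount a r > Num.sqrt (s_of_r a r) / (ln (s_of_r a r)) ^+ 3.
Proof.
exists (@inv_pow_coef R), `]1, expR (expR 2)[%classic; split.
  have -> : [set n | inv_pow_coef R n != 0] = [set: nat].
    by apply/seteqP; split => n // _; exact: inv_pow_coef_neq0.
  exact: infinite_nat.
split; first exact: limn_esup_root_inv_pow_coef.
split; first exact: finite_log_measure_itv.
move=> r r1 r_notin; apply: Ncount_inv_pow_coef_gt; rewrite leNgt.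
by apply: contra_notN r_notin => r_small; rewrite /= in_itv /= r1.
Qed.
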